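(* Let $\mathbb{K}$ be a field of characteristic $0$. For every $d\geq 4$ there is a positive integer $r_0$ such that for all $r\geq r_0$ there exists a standard graded Artinian Gorenstein $\mathbb{K}$-algebra of socle degree $d$ and codimension $r$ whose Hilbert function $(1,h_1,\ldots,h_d)$ is totally non-unimodal, i.e. $h_1>h_2>\cdots>h_{\lfloor d/2\rfloor}$. *)

From HB Require Import structures.
From mathcomp Require Import all_boot all_order all_algebra.
From mathcomp Require Import mpoly.

Set Implicit Arguments.
Unset Strict Implicit.
Unset Printing Implicit Defensive.

Import Order.TTheory GRing.Theory.
Local Open Scope ring_scope.

Section AG.
Variables (K : fieldType) (r : nat).
Implicit Types (I : {pred {mpoly K[r]}}) (p f g : {mpoly K[r]}).

Definition is_ideal I : Prop :=
  [/\ 0 \in I,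
      (forall p q, p \in I -> q \in I -> p + q \in I) &
      (forall p q, q \in I -> p * q \in I)].

Definition is_homogeneous I : Prop :=
  forall p (k : nat), p \in I -> pihomog mdeg k p \in I.

(* degree-k forms q_1..q_n are K-linearly independent modulo I,
   i.e. their classes in the degree-k component A_k of A = R/I are independent *)
Definition indep_mod I (k n : nat) (q : 'I_n -> {mpoly K[r]}) : Prop :=
  (forall j, q j \is k.-homog) /\
  (forall c : 'I_n -> K, \sum_(j < n) c j *: q j \in I -> forall j, c j = 0).

Definition hilb_fun_at I (k h : nat) : Prop :=
  (exists q : 'I_h -> {mpoly K[r]}, indep_mod I k q) /\
  ~ (exists q : 'I_h.+1 -> {mpoly K[r]}, indep_mod I k q).

Definition in_socle I f : Prop := forall i : 'I_r, f * 'X_i \in I.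

Definition socle_dim1 I : Prop :=
  exists f, [/\ in_socle I f, f \notin I &
    forall g, in_socle I g -> exists c : K, g - c *: f \in I].

(* A = R/I is a standard graded Artinian Gorenstein K-algebra of socle degree d:
   I a proper homogeneous ideal, A_d <> 0, A_(d+1) = 0 (so A_k = 0 for k > d,
   A is Artinian), and the socle of A is one-dimensional (Gorenstein). *)
Definition std_graded_AG I (d : nat) : Prop :=
  [/\ is_ideal I, is_homogeneous I & (1 : {mpoly K[r]}) \notin I] /\
  [/\ ~ hilb_fun_at I d 0, hilb_fun_at I d.+1 0 & socle_dim1 I].

End AG.

From HB Require Import structures.
From mathcomp Require Import all_boot all_order all_algebra.
From mathcomp Require Import mpoly zify boolp.

(* Macaulay duality, with contraction in place of differentiation so that the
   characteristic plays no role: if [F] is a sum of distinct degree-[d]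
   monomials, [R / Ann F] is standard graded Artinian Gorenstein of socle
   degree [d], and [h_k] counts the degree-[k] forms independent modulo [Ann F].
   Take [F = \sum_A u_A x^A + \sum_(l < t) w_l^d], [A] ranging over the
   [(d-1)]-subsets of [{0, .., s-1}]; the [t] pure powers only pad the
   codimension [r = s + 'C(s, d-1) + t], which is [h_1] since no linear form
   kills [F]. For [0 < k < d] the forms [u_A x^(A :\: C)], [#|C| = d - k], are
   independent modulo [Ann F], so [h_k >= 'C(s, d-k) + t]. A [j]-form lies in
   [Ann F] once its coefficients at the [x^B] and [w_l^j] and its pairings with
   the [x^C] vanish, so [h_j <= 'C(s, j) + 'C(s, d-j) + t]. For [s = 4d] and
   [2(k+1) <= d], ['C(s, d-k)] exceeds ['C(s, k+1) + 'C(s, d-k-1)], so [h] is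
   strictly decreasing on [1 .. d/2]. *)

Set Implicit Arguments.
Unset Strict Implicit.
Unset Printing Implicit Defensive.

Import Order.TTheory GRing.Theory.

Lemma leq_bin_lower_half s a b : a <= b -> 2 * b <= s -> 'C(s, a) <= 'C(s, b).
Proof.
elim: b => [|b IHb] le_ab le_bs; first by move: le_ab; rewrite leqn0 => /eqP ->.
case: (eqVneq a b.+1) => [-> //|ne_ab].
apply: leq_trans (IHb _ _) _; [lia | lia |].
by rewrite -(@leq_pmul2l b.+1) // mul_bin_left leq_mul2r; apply/orP; right; lia.
Qed.

Lemma ltn_binD_bin s d k : 4 * d <= s -> 2 * k.+1 <= d ->
  'C(s, k.+1) + 'C(s, d - k.+1) < 'C(s, d - k).
Proof.
move=> le_ds le_kd; set e := d - k.+1.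
have -> : d - k = e.+1 by rewrite /e; lia.
have Ce_gt0 : 0 < 'C(s, e) by rewrite bin_gt0 /e; lia.
have le_k1e : 'C(s, k.+1) <= 'C(s, e) by apply: leq_bin_lower_half; rewrite /e; lia.
have : 3 * 'C(s, e) <= 'C(s, e.+1).
  by rewrite -(@leq_pmul2l e.+1) // mul_bin_left mulnA leq_mul2r; apply/orP; right; lia.
lia.
Qed.

Section HilbertFunction.
Variables (K : fieldType) (r : nat) (I : {pred {mpoly K[r]}}).
Local Open Scope ring_scope.

Definition indep_forms (k n : nat) := exists q : 'I_n -> {mpoly K[r]}, indep_mod I k q.

Lemma indep_forms0 k : indep_forms k 0.
Proof. by exists (fun _ => 0); split=> [[]|c _ []]. Qed.

Lemma indep_forms_leq k m n : (m <= n)%N -> indep_forms k n -> indep_forms k m.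
Proof.
move=> le_mn [q [q_homog q_indep]].
exists (q \o widen_ord le_mn); split=> [j|c cqI i]; first exact: q_homog.
pose c' (l : 'I_n) := if insub (val l) is Some j then c j else 0.
have -> : c i = c' (widen_ord le_mn i) by rewrite /c' /= valK.
apply: q_indep; rewrite (bigID (fun l : 'I_n => (l < m)%N)) /= big_ord_narrow.
rewrite [X in _ + X]big1 => [|l /negbTE l_ge_m]; last by rewrite /c' insubF ?scale0r.
by rewrite addr0; under eq_bigr => l _ do rewrite /c' /= valK.
Qed.

Lemma scalar_lincomb (f : {mpoly K[r]} -> K) n (c : 'I_n -> K) q :
  scalar f -> f (\sum_i c i *: q i) = \sum_i c i * f (q i).
Proof.
move=> f_lin; pose g : {scalar _} := HB.pack f (GRing.isLinear.Build K _ _ *%R f f_lin).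
have -> : f = g by [].
by rewrite linear_sum; apply: eq_bigr => i _; rewrite linearZ.
Qed.

Lemma indep_forms_card_leq (W : finType) k (phi : W -> {mpoly K[r]} -> K) n :
  (forall w, scalar (phi w)) ->
  (forall p, p \is k.-homog -> (forall w, phi w p = 0) -> p \in I) ->
  indep_forms k n -> (n <= #|W|)%N.
Proof.
move=> phi_lin phi_ker [q [q_homog q_indep]].
pose M := \matrix_(i < n, l < #|W|) phi (enum_val l) (q i).
suff : row_free M by rewrite -row_leq_rank => /leq_trans; apply; apply: rank_leq_col.
apply: inj_row_free => v vM0; apply/rowP => i; rewrite mxE.
apply: (q_indep (fun j => v 0 j) _ i); apply: phi_ker => [|w].
  by apply: rpred_sum => j _; apply: dhomogZ.
transitivity ((v *m M) 0 (enum_rank w)); last by rewrite vM0 mxE.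
by rewrite scalar_lincomb // mxE; apply: eq_bigr => j _; rewrite mxE enum_rankK.
Qed.

Lemma hilb_fun_at_exists k b :
  (forall n, indep_forms k n -> (n <= b)%N) -> exists h, hilb_fun_at I k h.
Proof.
move=> bounded.
have ex_indep : exists n, `[< indep_forms k n >] by exists 0%N; apply/asboolP/indep_forms0.
have ub n : `[< indep_forms k n >] -> (n <= b)%N by move/asboolP; apply: bounded.
have [h /asboolP indep_h h_max] := ex_maxnP ex_indep ub.
by exists h; split=> // /asboolP /h_max; rewrite ltnn.
Qed.

Lemma hilb_fun_at_geq k h n : hilb_fun_at I k h -> indep_forms k n -> (n <= h)%N.
Proof.
by move=> [_ not_indep] indep_n; rewrite leqNgt; apply/negP => /indep_forms_leq/(_ indep_n).
Qed.

Lemma indep_linear_forms_leq n : 0 \in I -> indep_forms 1 n -> (n <= r)%N.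
Proof.
move=> I0 /(@indep_forms_card_leq _ 1 (fun i p => p@_U_(i))).
rewrite card_ord; apply=> [i a p q|p p_homog coef0]; first by rewrite linearP.
suff -> : p = 0 by [].
apply/mpolyP => m; rewrite mcoeff0.
have [/eqP/mdeg1P [i /eqP ->] //|] := eqVneq (mdeg m) 1%N.
exact: dhomog_nemf_coeff.
Qed.

End HilbertFunction.

Section MonomialSumDual.
Variables (K : fieldType) (r d : nat) (S : finType) (mon : S -> 'X_{1..r}).
Hypothesis mdeg_mon : forall a, mdeg (mon a) = d.
Local Open Scope ring_scope.

(* [pairF p] is the constant term of the contraction [p o F] of the form
   [F = \sum_a 'X_[mon a]]; using contraction rather than differentiation makes
   Macaulay duality, and everything below, characteristic-free. *)
Definition pairF (p : {mpoly K[r]}) : K := \sum_a p@_(mon a).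

Lemma pairF_is_scalar : scalar pairF.
Proof.
move=> c p q; rewrite /pairF mulr_sumr -big_split.
by apply: eq_bigr => a _; rewrite mcoeffD mcoeffZ.
Qed.

HB.instance Definition _ :=
  GRing.isLinear.Build K {mpoly K[r]} K *%R pairF pairF_is_scalar.

Definition annF : {pred {mpoly K[r]}} := fun p => `[< forall q, pairF (p * q) = 0 >].

Lemma annFP p : reflect (forall q, pairF (p * q) = 0) (p \in annF).
Proof. exact: asboolP. Qed.

Lemma pairFX_nmon m : (forall a, mon a != m) -> pairF 'X_[m] = 0.
Proof. by move=> nmon; apply: big1 => a _; rewrite mcoeffX eq_sym (negbTE (nmon a)). Qed.

Lemma pairF_mulX p z :
  pairF (p * 'X_[z]) = \sum_(m <- msupp p) p@_m * pairF 'X_[m + z].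
Proof.
rewrite {1}[p]mpolyE mulr_suml linear_sum /=; apply: eq_bigr => m _.
by rewrite -scalerAl linearZ /= -mpolyXD.
Qed.

Lemma annF_monomials p : (forall z, pairF (p * 'X_[z]) = 0) -> p \in annF.
Proof.
move=> pX0; apply/annFP => q; rewrite [q]mpolyE mulr_sumr linear_sum /= big1 // => m _.
by rewrite -scalerAr linearZ /= pX0 mulr0.
Qed.

Lemma pairF_homog_mulX j p z : p \is j.-homog -> (mdeg z + j != d)%N ->
  pairF (p * 'X_[z]) = 0.
Proof.
move=> p_homog deg_ne; rewrite pairF_mulX big1 // => m _.
have [deg_m|/(dhomog_nemf_coeff p_homog) ->] := eqVneq (mdeg m) j; last by rewrite mul0r.
rewrite pairFX_nmon ?mulr0 // => a; apply: contraNneq deg_ne => mon_a.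
by rewrite -(mdeg_mon a) mon_a mdegD deg_m addnC.
Qed.

Lemma annF_ideal : is_ideal annF.
Proof.
split=> [|p q /annFP pI /annFP qI|p q /annFP qI]; apply/annFP => u.
- by rewrite mul0r raddf0.
- by rewrite mulrDl raddfD /= pI qI addr0.
- by rewrite -mulrA mulrCA qI.
Qed.

Lemma annF_homogeneous : is_homogeneous annF.
Proof.
move=> p k /annFP pI; apply: annF_monomials => z.
have [deg_z|] := eqVneq (mdeg z + k)%N d; last exact: pairF_homog_mulX (pihomogP _ _ _).
rewrite -(pI 'X_[z]) {2}(mpolyE p) pihomogE !mulr_suml !linear_sum /=.
rewrite [in RHS](bigID (fun m => mdeg m == k)) /= [X in _ = _ + X]big1 ?addr0 // => m deg_m.
rewrite -scalerAl linearZ /= -mpolyXD pairFX_nmon ?mulr0 // => a.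
apply: contraNneq deg_m => mon_a.
by rewrite -(eqn_add2l (mdeg z)) -mdegD addmC -mon_a mdeg_mon deg_z.
Qed.

Lemma annF_high_degree j p : (d < j)%N -> p \is j.-homog -> p \in annF.
Proof.
move=> lt_dj p_homog; apply: annF_monomials => z.
by apply: pairF_homog_mulX p_homog _; rewrite neq_ltn (ltn_addl _ lt_dj) orbT.
Qed.

Hypothesis mon_inj : injective mon.

Lemma pairFX_mon a : pairF 'X_[mon a] = 1.
Proof.
rewrite /pairF (bigD1 a) //= mcoeffX eqxx big1 ?addr0 // => b ne_ba.
by rewrite mcoeffX (inj_eq mon_inj) eq_sym (negbTE ne_ba).
Qed.

(* Each [m x] pairs to [1] with its partner [z x] and to [0] with the others. *)
Lemma indep_forms_annF_pairs (X : finType) j (m z : X -> 'X_{1..r}) (wit : X -> S) :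
  (forall x, mdeg (m x) = j) -> (forall x, mon (wit x) = (m x + z x)%MM) ->
  (forall x y a, mon a = (m x + z y)%MM -> x = y) ->
  indep_forms annF j #|X|.
Proof.
move=> deg_m mon_wit pairs_uniq.
exists (fun i => 'X_[m (enum_val i)]); split=> [i|c /annFP cI i].
  by rewrite dhomogX /= deg_m.
have := cI 'X_[z (enum_val i)]; rewrite mulr_suml linear_sum /= (bigD1 i) //=.
rewrite -scalerAl linearZ /= -mpolyXD -mon_wit pairFX_mon mulr1 big1 ?addr0 // => l ne_li.
rewrite -scalerAl linearZ /= -mpolyXD pairFX_nmon ?mulr0 // => a.
by apply/eqP => /pairs_uniq /enum_val_inj eq_li; rewrite eq_li eqxx in ne_li.
Qed.

Lemma annF_hilb_exists j : exists h, hilb_fun_at annF j h.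
Proof.
apply: (@hilb_fun_at_exists _ _ _ _ #|{: 'X_{1..r < d.+1}}|) => n.
apply: (indep_forms_card_leq (phi := fun w p => pairF (p * 'X_[val w]))).
  by move=> w a p q; rewrite mulrDl -scalerAl linearP.
move=> p p_homog pX0; apply: annF_monomials => z.
have [lt_zd|le_dz] := ltnP (mdeg z) d.+1; first exact: (pX0 (BMultinom lt_zd)).
by apply: pairF_homog_mulX p_homog _; rewrite neq_ltn (leq_trans le_dz) ?leq_addr ?orbT.
Qed.

Lemma annF_hilb1 (cover : 'I_r -> S) :
  (forall i, (U_(i) <= mon (cover i))%MM) ->
  (forall a b i j, (mon a + U_(i))%MM = (mon b + U_(j))%MM -> a = b) ->
  hilb_fun_at annF 1 r.
Proof.
move=> cover_i exchange; have [annF0 _ _] := annF_ideal.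
split; last by move/(indep_linear_forms_leq annF0); rewrite ltnn.
pose z i := (mon (cover i) - U_(i))%MM.
have mon_cover i : mon (cover i) = (U_(i) + z i)%MM by rewrite addmC submK.
suff : indep_forms annF 1 #|'I_r| by rewrite card_ord.
apply: (indep_forms_annF_pairs (z := z) (wit := cover)) => [i|//|i j a mon_a].
  exact: mdeg1.
have cover_j : a = cover j.
  apply: (exchange _ _ j i); rewrite mon_a mon_cover.
  by apply/mnmP => l; rewrite !mnmDE; lia.
move: mon_a; rewrite cover_j mon_cover => /addIm /mnmP /(_ j).
by rewrite !mnm1E eqxx; case: eqP.
Qed.

Section Socle.
Variable a0 : S.

Lemma annF_socle_dim1 : socle_dim1 annF.
Proof.
have F_homog : ('X_[mon a0] : {mpoly K[r]}) \is d.-homog by rewrite dhomogX /= mdeg_mon.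
exists 'X_[mon a0]; split=> [i||g g_socle].
- apply: (@annF_high_degree d.+1) => //.
  by rewrite -mpolyXD dhomogX /= mdegD mdeg_mon mdeg1 addn1.
- by apply/annFP => /(_ 1); rewrite mulr1 pairFX_mon; apply/eqP/oner_neq0.
exists (pairF g); apply: annF_monomials => z.
rewrite mulrBl raddfB /= -scalerAl linearZ /=.
case: (pickP (fun i => z i != 0%N)) => [i z_i|z0]; last first.
  have -> : z = 0%MM by apply/mnmP => i; rewrite mnm0E; apply/eqP/negbFE/z0.
  by rewrite mpolyX0 !mulr1 pairFX_mon mulr1 subrr.
have z_gt0 : (0 < mdeg z)%N.
  by rewrite lt0n mdeg_eq0; apply: contraNneq z_i => ->; rewrite mnm0E.
rewrite (pairF_homog_mulX F_homog) ?mulr0 ?subr0; last by lia.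
have le_iz : (U_(i) <= z)%MM by rewrite lep1mP.
by rewrite -(submK le_iz) addmC mpolyXD mulrA (annFP _ (g_socle i)).
Qed.

Lemma annF_std_graded_AG : std_graded_AG annF d.
Proof.
have indep_top : indep_forms annF d 1.
  rewrite -card_unit.
  apply: (@indep_forms_annF_pairs _ _ (fun _ => mon a0) (fun _ => 0%MM) (fun _ => a0)).
  - by move=> _; rewrite mdeg_mon.
  - by move=> _; rewrite addm0.
  - by move=> [] [].
split; split.
- exact: annF_ideal.
- exact: annF_homogeneous.
- by apply/annFP => /(_ 'X_[mon a0]); rewrite mul1r pairFX_mon; apply/eqP/oner_neq0.
- by move/hilb_fun_at_geq/(_ indep_top).
- split=> [|[q [q_homog q_indep]]]; first exact: indep_forms0.
  have := q_indep (fun _ => 1) _ ord0; rewrite big_ord1 scale1r.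
  by move=> /(_ (annF_high_degree (ltnSn d) (q_homog ord0))) /eqP; rewrite oner_eq0.
- exact: annF_socle_dim1.
Qed.

End Socle.

End MonomialSumDual.

Lemma exists_card_superset (T : finType) (C : {set T}) k :
  (#|C| <= k <= #|T|) -> exists2 A : {set T}, C \subset A & #|A| = k.
Proof.
elim: k => [|k IHk] /andP [le_Ck le_kT].
  by exists C => //; apply/eqP; rewrite -leqn0.
have [<-|ne_Ck] := eqVneq #|C| k.+1; first by exists C.
have [|A sub_CA card_A] := IHk; first by apply/andP; split; lia.
have /set0Pn [x] : ~: A != set0 by rewrite -card_gt0; have := cardsC A; lia.
rewrite inE => xNA; exists (x |: A); first exact: subset_trans sub_CA (subsetUr _ _).
by rewrite cardsU1 xNA card_A.
Qed.

Section Construction.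
Variables (K : fieldType) (d s t r : nat).
Hypothesis d_gt1 : 1 < d.

Definition ksubset k := {A : {set 'I_s} | #|A| == k}.

Lemma card_ksubset k : #|{: ksubset k}| = 'C(s, k).
Proof. by rewrite card_sig -[in RHS](card_ord s) -card_draws cardsE. Qed.

(* The variables [x_i] ([i < s]), [u_A] ([A] a [(d-1)]-subset of ['I_s]) and
   [w_l] ([l < t]), numbered [0 .. r-1] through [var]. *)
Definition Var := ('I_s + ksubset d.-1 + 'I_t)%type.
Hypothesis card_Var : #|{: Var}| = r.

Definition var (v : Var) : 'I_r := cast_ord card_Var (enum_rank v).
Definition unvar (i : 'I_r) : Var := enum_val (cast_ord (esym card_Var) i).

Lemma varK : cancel var unvar.
Proof. by move=> v; rewrite /var /unvar cast_ordK enum_rankK. Qed.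

Lemma unvarK : cancel unvar var.
Proof. by move=> i; rewrite /var /unvar enum_valK cast_ordKV. Qed.

Lemma var_inj : injective var. Proof. exact: can_inj varK. Qed.

Definition mnm_of (g : Var -> nat) : 'X_{1..r} := [multinom g (unvar i) | i < r].

Lemma mnm_ofE g v : mnm_of g (var v) = g v.
Proof. by rewrite mnmE varK. Qed.

Lemma eq_mnm_var (m m' : 'X_{1..r}) : (forall v, m (var v) = m' (var v)) -> m = m'.
Proof. by move=> eq_mm'; apply/mnmP => i; rewrite -(unvarK i) eq_mm'. Qed.

Lemma mdeg_mnm_of g : mdeg (mnm_of g) = \sum_v g v.
Proof.
rewrite mdegE (reindex var); last by exists unvar => i _; [apply: varK | apply: unvarK].
by apply: eq_bigr => v _; rewrite mnm_ofE.
Qed.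

Definition xexp (C : {set 'I_s}) (v : Var) : nat :=
  if v is inl (inl i) then i \in C else 0.
Definition uexp (A : ksubset d.-1) (v : Var) : nat :=
  if v is inl (inr B) then B == A else 0.
Definition wexp (l : 'I_t) (k : nat) (v : Var) : nat :=
  if v is inr l' then (l' == l) * k else 0.

Lemma sum_xexp C : \sum_v xexp C v = #|C|.
Proof.
rewrite !big_sumType /= [X in _ + X]big1 // [X in _ + X + _]big1 // !addn0.
rewrite -sum1_card [RHS]big_mkcond; apply: eq_bigr => i _; by case: (i \in C).
Qed.

Lemma sum_uexp A : \sum_v uexp A v = 1.
Proof.
rewrite !big_sumType /= big1 // [X in _ + X]big1 // add0n addn0.
by rewrite (bigD1 A) //= eqxx big1 // => B /negbTE ->.
Qed.

Lemma sum_wexp l k : \sum_v wexp l k v = k.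
Proof.
rewrite !big_sumType /= big1 // [X in _ + X + _]big1 // !add0n.
by rewrite (bigD1 l) //= eqxx mul1n big1 ?addn0 // => l' /negbTE ->.
Qed.

(* [F = \sum_A u_A x^A + \sum_l w_l^d] *)
Definition Gen := (ksubset d.-1 + 'I_t)%type.
Definition gexp (a : Gen) (v : Var) : nat :=
  match a with inl A => uexp A v + xexp (val A) v | inr l => wexp l d v end.
Definition gen (a : Gen) : 'X_{1..r} := mnm_of (gexp a).

Local Notation I := (annF (K := K) gen).

Lemma mdeg_gen a : mdeg (gen a) = d.
Proof.
rewrite mdeg_mnm_of; case: a => [A|l] /=; last exact: sum_wexp.
by rewrite big_split /= sum_uexp sum_xexp (eqP (valP A)); lia.
Qed.

Lemma gexp_gt0_u a A : 0 < gexp a (inl (inr A)) -> a = inl A.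
Proof. by case: a => [B|l] //=; rewrite addn0; case: eqP => // ->. Qed.

Lemma gexp_gt0_w a l : 0 < gexp a (inr l) -> a = inr l.
Proof. by case: a => [B|l'] //=; case: eqP => // ->. Qed.

Lemma gexp_exchange a b v0 v1 :
  (forall v, gexp a v + (v0 == v) = gexp b v + (v1 == v)) -> a = b.
Proof.
have inr_case a' b' v0' v1' l : a' = inr l ->
    (forall v, gexp a' v + (v0' == v) = gexp b' v + (v1' == v)) -> b' = a'.
  by move=> -> E; apply: gexp_gt0_w; have := E (inr l); rewrite /= eqxx mul1n; lia.
move=> E; case: a E => [A|l] E; last exact/esym/(inr_case _ _ _ _ l).
case: b E => [B|l] E; last by apply: (inr_case _ _ v1 v0 l) => // v; rewrite E.
have [-> //|/negbTE neq_AB] := eqVneq A B.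
suff eq_AB : A = B by rewrite eq_AB eqxx in neq_AB.
have v1_uA : v1 = inl (inr A).
  by have := E (inl (inr A)); rewrite /= eqxx neq_AB; case: (v1 =P _) => // _; lia.
have v0_uB : v0 = inl (inr B).
  by have := E (inl (inr B)); rewrite /= eqxx eq_sym neq_AB; case: (v0 =P _) => // _; lia.
apply: val_inj; apply/setP => i; have := E (inl (inl i)).
by rewrite v0_uB v1_uA /= !add0n !addn0; case: (i \in _); case: (i \in _).
Qed.

Lemma gen_exchange a b i j : (gen a + U_(i))%MM = (gen b + U_(j))%MM -> a = b.
Proof.
move=> e; apply: (@gexp_exchange _ _ (unvar i) (unvar j)) => v.
have := congr1 (fun m : 'X_{1..r} => m (var v)) e; rewrite !mnmDE !mnm_ofE !mnm1E.
by rewrite -(unvarK i) -(unvarK j) !(inj_eq var_inj) !varK.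
Qed.

Variable A0 : ksubset d.-1.

Lemma gen_inj : injective gen.
Proof.
move=> a b e; pose i := var (inl (inr A0)).
by apply: (@gen_exchange _ _ i i); rewrite e.
Qed.

Definition ext (C : {set 'I_s}) : ksubset d.-1 :=
  odflt A0 [pick A : ksubset d.-1 | C \subset val A].

Lemma subset_ext (C : {set 'I_s}) : #|C| <= d.-1 -> C \subset val (ext C).
Proof.
move=> le_C; rewrite /ext; case: pickP => [A //|noA].
have le_s : d.-1 <= s by rewrite -[s]card_ord -(eqP (valP A0)) max_card.
have [|A sub_CA /eqP card_A] := @exists_card_superset _ C d.-1.
  by rewrite le_C card_ord.
by have := noA (exist _ A card_A); rewrite /= sub_CA.
Qed.

Definition cover (v : Var) : Gen := match v with
  | inl (inl i) => inl (ext [set i]) | inl (inr A) => inl A | inr l => inr l end.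

Lemma U_le_gen_cover v : (U_(var v) <= gen (cover v))%MM.
Proof.
rewrite lep1mP mnm_ofE -lt0n; case: v => [[i|A]|l] /=.
- by rewrite add0n (subsetP (subset_ext _)) ?set11 // cards1; lia.
- by rewrite eqxx.
- by rewrite eqxx mul1n; lia.
Qed.

Lemma le_gexp_inl_xexp A (g : Var -> nat) :
  (forall v, g v <= gexp (inl A) v) -> g (inl (inr A)) = 0 ->
  forall v, g v = xexp [set i | 0 < g (inl (inl i))] v.
Proof.
move=> le_g gu0 v; have := le_g v; case: v => [[i|B]|l] /=.
- by rewrite inE add0n; case: (i \in val A); case: (g _) => [|[]].
- by case: (eqVneq B A) => [->|_] //=; lia.
- by rewrite leqn0 => /eqP.
Qed.

Lemma gen_split a m z : gen a = (m + z)%MM ->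
  [\/ exists C, z = mnm_of (xexp C), exists B, m = mnm_of (xexp B)
     | exists l k, m = mnm_of (wexp l k)].
Proof.
move=> e; have {e}E v : gexp a v = m (var v) + z (var v).
  by have := congr1 (fun m : 'X_{1..r} => m (var v)) e; rewrite mnmDE mnm_ofE.
case: a E => [A|l] E.
  have [zu0|zu_gt0] := posnP (z (var (inl (inr A)))).
    apply: Or31; exists [set i | 0 < z (var (inl (inl i)))].
    apply: eq_mnm_var => v; rewrite mnm_ofE.
    by apply: (@le_gexp_inl_xexp A (fun v => z (var v))) => // v'; rewrite E leq_addl.
  apply: Or32; exists [set i | 0 < m (var (inl (inl i)))].
  apply: eq_mnm_var => v; rewrite mnm_ofE.
  apply: (@le_gexp_inl_xexp A (fun v => m (var v))) => [v'|]; first by rewrite E leq_addr.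
  by have := E (inl (inr A)); rewrite /= eqxx; lia.
apply: Or33; exists l, (m (var (inr l))); apply: eq_mnm_var => v; rewrite mnm_ofE.
have := E v; case: v => [[i|B]|l'] /=; try lia.
by case: (eqVneq l' l) => [->|ne_l]; rewrite ?eqxx ?mul1n ?(negbTE ne_l) ?mul0n //; lia.
Qed.

Section LowerBound.
Variable k : nat.
Hypotheses (k_gt0 : 0 < k) (lt_kd : k < d).

Lemma subset_ext_val (C : ksubset (d - k)) : val C \subset val (ext (val C)).
Proof. by apply: subset_ext; rewrite (eqP (valP C)); lia. Qed.

(* [fac x] is the contraction of [gen (gen_of x)] by [cofac x]: [x^C] contracts
   [u_A x^A], [A = ext C], to [u_A x^(A :\: C)]. *)
Definition fac (x : ksubset (d - k) + 'I_t) : 'X_{1..r} := match x with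
  | inl C => mnm_of (fun v => uexp (ext (val C)) v + xexp (val (ext (val C)) :\: val C) v)
  | inr l => mnm_of (wexp l k) end.
Definition cofac (x : ksubset (d - k) + 'I_t) : 'X_{1..r} := match x with
  | inl C => mnm_of (xexp (val C)) | inr l => mnm_of (wexp l (d - k)) end.
Definition gen_of (x : ksubset (d - k) + 'I_t) : Gen := match x with
  | inl C => inl (ext (val C)) | inr l => inr l end.

Lemma mdeg_fac x : mdeg (fac x) = k.
Proof.
case: x => [C|l]; rewrite mdeg_mnm_of ?sum_wexp // big_split /= sum_uexp sum_xexp.
rewrite cardsD (setIidPr (subset_ext_val C)) (eqP (valP C)) (eqP (valP (ext _))); lia.
Qed.

Lemma gen_ofE x : gen (gen_of x) = (fac x + cofac x)%MM.
Proof.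
apply: eq_mnm_var => v; rewrite mnmDE.
case: x => [C|l]; rewrite /= !mnm_ofE.
  2: by case: v => [[i|A]|l'] //=; rewrite -mulnDr subnKC // ltnW.
case: v => [[i|A]|l] //=; last by rewrite !addn0.
rewrite !add0n inE; case: (boolP (i \in val C)) => [iC|_]; last by rewrite addn0.
by rewrite (subsetP (subset_ext_val C) i iC).
Qed.

Lemma fac_cofac_uniq x y a : gen a = (fac x + cofac y)%MM -> x = y.
Proof.
move=> e; have {e}E v : gexp a v = fac x (var v) + cofac y (var v).
  by have := congr1 (fun m : 'X_{1..r} => m (var v)) e; rewrite mnmDE mnm_ofE.
case: x E => [C|l] E.
  have {}E v : gexp (inl (ext (val C))) v = fac (inl C) (var v) + cofac y (var v).
    by rewrite -E (@gexp_gt0_u a (ext (val C))) // E /= !mnm_ofE /= eqxx.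
  case: y E => [C'|l] E; last by have := E (inr l); rewrite /= !mnm_ofE /= eqxx mul1n; lia.
  congr inl; apply: val_inj; apply/setP => i; have := E (inl (inl i)).
  rewrite /= !mnm_ofE /= inE !add0n; case: (boolP (i \in val C)) => iC.
    by rewrite (subsetP (subset_ext_val C) i iC) /=; case: (i \in val C').
  by case: (i \in val C'); case: (i \in _) => //=; lia.
have {}E v : gexp (inr l) v = fac (inr l) (var v) + cofac y (var v).
  by rewrite -E (@gexp_gt0_w a l) // E /= !mnm_ofE /= eqxx mul1n; lia.
case: y E => [C'|l'] E.
  have /set0Pn [i iC'] : val C' != set0 by rewrite -card_gt0 (eqP (valP C')); lia.
  by have := E (inl (inl i)); rewrite /= !mnm_ofE /= iC'.
have := E (inr l'); rewrite /= !mnm_ofE /= eqxx mul1n.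
by case: (eqVneq l' l) => [->|] //=; lia.
Qed.

Lemma annF_gen_indep_forms : indep_forms I k ('C(s, d - k) + t).
Proof.
have <- : #|{: ksubset (d - k) + 'I_t}| = 'C(s, d - k) + t.
  by rewrite card_sum card_ksubset card_ord.
exact (indep_forms_annF_pairs K gen_inj mdeg_fac gen_ofE fac_cofac_uniq).
Qed.

End LowerBound.

Section UpperBound.
Variable j : nat.
Local Open Scope ring_scope.

Definition probe (w : ksubset j + ksubset (d - j)%N + 'I_t) (p : {mpoly K[r]}) : K :=
  match w with
  | inl (inl B) => p@_(mnm_of (xexp (val B)))
  | inl (inr C) => pairF gen (p * 'X_[mnm_of (xexp (val C))])
  | inr l => p@_(mnm_of (wexp l j))
  end.

Lemma probe_scalar w : scalar (probe w).
Proof. by case: w => [[B|C]|l] a p q /=; rewrite ?linearP // mulrDl -scalerAl linearP. Qed.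

(* Against a [z] that is not a squarefree [x]-monomial, by [gen_split] only the
   coefficients of [p] at the [x^B] and the [w_l^j] pair nontrivially with [F]. *)
Lemma probe_kernel p : p \is j.-homog -> (forall w, probe w p = 0) -> p \in I.
Proof.
move=> p_homog probe0; apply: annF_monomials => z.
have [[C ->]|z_nsqf] := pselect (exists C, z = mnm_of (xexp C)).
  have [/eqP card_C|ne_C] := eqVneq #|C| (d - j)%N.
    exact: (probe0 (inl (inr (exist _ C card_C)))).
  apply: (pairF_homog_mulX mdeg_gen p_homog).
  by rewrite mdeg_mnm_of sum_xexp; apply: contra_neq ne_C; lia.
rewrite pairF_mulX big1 // => m _.
have [deg_m|/(dhomog_nemf_coeff p_homog) ->] := eqVneq (mdeg m) j; last by rewrite mul0r.
have [[a gen_a]|no_gen] := pselect (exists a, gen a = (m + z)%MM); last first.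
  by rewrite pairFX_nmon ?mulr0 // => a; apply/eqP => gen_a; apply: no_gen; exists a.
suff -> : p@_m = 0 by rewrite mul0r.
case: (gen_split gen_a) => [/z_nsqf [] | [B eq_m] | [l [k eq_m]]].
  have card_B : #|B| == j by rewrite -deg_m eq_m mdeg_mnm_of sum_xexp.
  by have := probe0 (inl (inl (exist _ B card_B))); rewrite /= eq_m.
have eq_k : k = j by rewrite -deg_m eq_m mdeg_mnm_of sum_wexp.
by have := probe0 (inr l); rewrite /= eq_m eq_k.
Qed.

Lemma annF_gen_indep_forms_leq n :
  indep_forms I j n -> (n <= 'C(s, j) + 'C(s, d - j) + t)%N.
Proof.
move/(indep_forms_card_leq probe_scalar probe_kernel).
by rewrite !card_sum !card_ksubset card_ord.
Qed.

End UpperBound.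

Lemma annF_gen_std_graded_AG : std_graded_AG I d.
Proof. exact: annF_std_graded_AG mdeg_gen gen_inj (inl A0). Qed.

Lemma annF_gen_hilb1 : hilb_fun_at I 1 r.
Proof.
apply: (annF_hilb1 K gen_inj (cover := cover \o unvar) _ gen_exchange) => i.
by rewrite -{1}(unvarK i) U_le_gen_cover.
Qed.

End Construction.

Local Open Scope ring_scope.

Theorem corollary2p4 (K : fieldType) (charK0 : [pchar K] =i pred0)
  (d : nat) (hd : (4 <= d)%N) :
  exists r0 : nat, (0 < r0)%N /\
    forall r : nat, (r0 <= r)%N ->
      exists I : {pred {mpoly K[r]}},
        [/\ std_graded_AG I d,
            hilb_fun_at I 1 r &
            exists h : nat -> nat,
              (forall k, hilb_fun_at I k (h k)) /\
              (forall k, (1 <= k)%N -> (k < d./2)%N -> (h k.+1 < h k)%N)].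
Proof.
pose s := (4 * d)%N; exists (s + 'C(s, d.-1)).+1; split=> // r le_r0r.
pose t := (r - (s + 'C(s, d.-1)))%N.
have card_Var : #|{: Var d s t}| = r by rewrite !card_sum !card_ord card_ksubset /t; lia.
have d_gt1 : (1 < d)%N by lia.
have [|A0 _ /eqP card_A0] := @exists_card_superset _ (set0 : {set 'I_s}) d.-1.
  by rewrite cards0 card_ord; lia.
pose A0' : ksubset s d.-1 := exist _ A0 card_A0.
exists (annF (gen card_Var)); split.
- exact: annF_gen_std_graded_AG d_gt1 card_Var A0'.
- exact: annF_gen_hilb1 d_gt1 card_Var A0'.
have [h hh] := choice (annF_hilb_exists K (mdeg_gen d_gt1 card_Var)).
exists h; split=> // k k_gt0 lt_k_half.
have le_kd : (2 * k.+1 <= d)%N by rewrite mul2n -geq_half_double.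
have lt_kd : (k < d)%N by lia.
have := annF_gen_indep_forms_leq d_gt1 (proj1 (hh k.+1)).
have := hilb_fun_at_geq (hh k) (annF_gen_indep_forms K d_gt1 card_Var A0' k_gt0 lt_kd).
have := @ltn_binD_bin s d k (leqnn _) le_kd.
lia.
Qed.
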